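(* Let $A,B$ be effect algebras. The category $\beta_{A,B}$ of bimorphisms from $A,B$ is isomorphic to the category of cocones under the diagram $D_{A,B}\colon\int R(A)\times\int R(B)\to\mathbf{EA}$. Under this isomorphism, $C$-valued bimorphisms correspond exactly to cocones with apex $C$. Explicitly, a bimorphism $h$ corresponds to the cocone whose component at $(g_A,g_B)$, with $g_A\colon 2^{[n]}\to A$ and $g_B\colon 2^{[m]}\to B$, is $$X\mapsto \sum_{(i,j)\in X}h\bigl(g_A(\{i\}),g_B(\{j\})\bigr),\qquad X\subseteq[n]\times[m].$$ Conversely, a cocone $(v)$ corresponds to the bimorphism $h(a,b)=v_{\langle a\rangle,\langle b\rangle}(\{(1,1)\})$, where $\langle a\rangle\colon 2^{[2]}\to A$ is the observable with $\{1\}\mapsto a$ and $\{2\}\mapsto a^\perp$.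
   Context: An effect algebra is a partial algebra $(A;+,0,1)$, with a binary partial operation $+$ and constants $0,1$, satisfying: (E1) if $a+b$ is defined, then $b+a$ is defined and $a+b=b+a$; (E2) if $a+b$ and $(a+b)+c$ are defined, then $b+c$ and $a+(b+c)$ are defined and $(a+b)+c=a+(b+c)$; (E3) for every $a$ there is a unique $a^\perp$ such that $a+a^\perp=1$; (E4) if $a+1$ is defined, then $a=0$. One-element effect algebras are allowed. We write $a\perp b$ when $a+b$ is defined. Morphisms of effect algebras preserve $1$ and defined sums; $\mathbf{EA}$ is their category. Boolean algebras are effect algebras via: $x+y$ is defined iff $x\wedge y=0$, and then $x+y=x\vee y$. For $[n]=\{1,\dots,n\}$, $\mathbf{FinBool}$ is the full subcategory of Boolean algebras on the objects $2^{[n]}$, $n\in\mathbb N$. The category $\int R(A)$ has: - objects: pairs $(2^{[n]},g)$ with $g\colon 2^{[n]}\to A$ an effect-algebra morphism; - arrows $(2^{[n]},g)\to(2^{[n']},g')$: Boolean algebra morphisms $f\colon 2^{[n]}\to 2^{[n']}$ with $g'\circ f=g$. The coproduct of Boolean algebras is denoted $*$, and $2^{[n]}*2^{[m]}$ is identified with $2^{[n]\times[m]}$. For morphisms $s\colon 2^{[n]}\to 2^{[n']}$ and $t\colon 2^{[m]}\to 2^{[m']}$, $$(s*t)(X)=\bigcup_{(i,j)\in X}s(\{i\})\times t(\{j\}).$$ $D_{A,B}\colon\int R(A)\times\int R(B)\to\mathbf{EA}$ sends $\bigl((2^{[n]},g_A),(2^{[m]},g_B)\bigr)$ to $2^{[n]}*2^{[m]}$,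 and sends $(f_A,f_B)$ to $f_A*f_B$. A bimorphism from $A,B$ to $C$ is a map $h\colon A\times B\to C$ satisfying: - $h(1,1)=1$; - $a_1\perp a_2$ implies $h(a_1,b)\perp h(a_2,b)$ and $h(a_1+a_2,b)=h(a_1,b)+h(a_2,b)$; - symmetrically in the second argument. $\beta_{A,B}$ is the category whose objects are bimorphisms from $A,B$ (into any $C$), and whose morphisms $h\to h'$ are $\mathbf{EA}$-morphisms $f$ with $f\circ h=h'$. The category of cocones under $D_{A,B}$ has morphisms given by $\mathbf{EA}$-maps between apexes commuting with all components. *)

From mathcomp Require Import all_boot.
Set Implicit Arguments. Unset Strict Implicit. Unset Printing Implicit Defensive.

(* The partial operation + is a function into option; a + b defined <-> Some.
   The unique orthosupplement of (E3) is recorded as a field [eperp]. *)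
Record EffectAlgebra := {
  ecarrier :> Type;
  esum : ecarrier -> ecarrier -> option ecarrier;
  ezero : ecarrier;
  eone : ecarrier;
  eperp : ecarrier -> ecarrier;
  eaE1 : forall a b s, esum a b = Some s -> esum b a = Some s;
  eaE2 : forall a b c ab abc, esum a b = Some ab -> esum ab c = Some abc ->
           exists bc, esum b c = Some bc /\ esum a bc = Some abc;
  eaE3 : forall a, esum a (eperp a) = Some eone /\
           (forall b, esum a b = Some eone -> b = eperp a);
  eaE4 : forall a, (exists s, esum a eone = Some s) -> a = ezero
}.
Arguments esum {e}. Arguments ezero {e}. Arguments eone {e}. Arguments eperp {e}.

Definition ea_hom (A C : EffectAlgebra) (f : A -> C) : Prop :=
  f eone = eone /\ forall a b s, esum a b = Some s -> esum (f a) (f b) = Some (f s).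

(* Morphisms from the Boolean algebra {set T} (viewed as an effect algebra:
   X + Y defined iff X :&: Y = set0, and then X + Y = X :|: Y) into C. *)
Definition set_ea_hom (T : finType) (C : EffectAlgebra) (g : {set T} -> C) : Prop :=
  g setT = eone /\
  forall X Y : {set T}, X :&: Y = set0 -> esum (g X) (g Y) = Some (g (X :|: Y)).

(* Boolean algebra morphisms 2^[n] -> 2^[n'] ('I_n plays the role of [n]) *)
Definition bool_hom (n n' : nat) (f : {set 'I_n} -> {set 'I_n'}) : Prop :=
  f set0 = set0 /\ f setT = setT /\
  (forall X Y, f (X :|: Y) = f X :|: f Y) /\
  (forall X Y, f (X :&: Y) = f X :&: f Y) /\
  (forall X, f (~: X) = ~: f X).

Definition intR_obj (A : EffectAlgebra) (n : nat) (g : {set 'I_n} -> A) : Prop :=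
  set_ea_hom g.
Definition intR_arrow (A : EffectAlgebra) (n n' : nat)
    (g : {set 'I_n} -> A) (g' : {set 'I_n'} -> A) (f : {set 'I_n} -> {set 'I_n'}) : Prop :=
  bool_hom f /\ forall X, g' (f X) = g X.

(* coproduct of Boolean morphisms: (s * t)(X) = U_{(i,j) in X} s{i} x t{j} *)
Definition bprod (n n' m m' : nat) (s : {set 'I_n} -> {set 'I_n'})
    (t : {set 'I_m} -> {set 'I_m'}) (X : {set 'I_n * 'I_m}) : {set 'I_n' * 'I_m'} :=
  \bigcup_(p in X) setX (s [set p.1]) (t [set p.2]).

(* A family of components, indexed by the data of pairs of objects of
   ∫R(A) x ∫R(B); only its values at genuine objects matter. *)
Definition cocone_data (A B C : EffectAlgebra) :=
  forall (n m : nat), ({set 'I_n} -> A) -> ({set 'I_m} -> B) -> {set 'I_n * 'I_m} -> C.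

Definition is_cocone (A B C : EffectAlgebra) (v : cocone_data A B C) : Prop :=
  (forall n m gA gB, intR_obj gA -> intR_obj gB -> set_ea_hom (v n m gA gB)) /\
  (forall n n' m m' (gA : {set 'I_n} -> A) (gA' : {set 'I_n'} -> A)
          (gB : {set 'I_m} -> B) (gB' : {set 'I_m'} -> B) fA fB,
     intR_obj gA -> intR_obj gA' -> intR_obj gB -> intR_obj gB' ->
     intR_arrow gA gA' fA -> intR_arrow gB gB' fB ->
     forall X, v n' m' gA' gB' (bprod fA fB X) = v n m gA gB X).

Definition cocone_hom (A B C C' : EffectAlgebra) (v : cocone_data A B C)
    (v' : cocone_data A B C') (f : C -> C') : Prop :=
  ea_hom f /\
  forall n m gA gB, intR_obj gA -> intR_obj gB ->
    forall X, f (v n m gA gB X) = v' n m gA gB X.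

Definition is_bimorphism (A B C : EffectAlgebra) (h : A -> B -> C) : Prop :=
  h eone eone = eone /\
  (forall a1 a2 s b, esum a1 a2 = Some s -> esum (h a1 b) (h a2 b) = Some (h s b)) /\
  (forall a b1 b2 s, esum b1 b2 = Some s -> esum (h a b1) (h a b2) = Some (h a s)).

Definition bimorphism_hom (A B C C' : EffectAlgebra) (h : A -> B -> C)
    (h' : A -> B -> C') (f : C -> C') : Prop :=
  ea_hom f /\ forall a b, f (h a b) = h' a b.

Definition esum_list (C : EffectAlgebra) (s : seq C) : option C :=
  foldr (fun x acc => match acc with Some y => esum x y | None => None end)
        (Some ezero) s.

Definition bimorphism_terms (A B C : EffectAlgebra) (h : A -> B -> C) (n m : nat)
    (gA : {set 'I_n} -> A) (gB : {set 'I_m} -> B) (X : {set 'I_n * 'I_m}) : seq C :=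
  [seq h (gA [set p.1]) (gB [set p.2]) | p <- enum X].

Definition cocone_of_bimorphism (A B C : EffectAlgebra) (h : A -> B -> C)
    : cocone_data A B C :=
  fun n m gA gB X => odflt ezero (esum_list (bimorphism_terms h gA gB X)).

(* the observable <a> : 2^[2] -> A, {1} |-> a, {2} |-> a^perp
   (here [2] = 'I_2, with 1 ~ ord0 and 2 ~ ord_max) *)
Definition obs (A : EffectAlgebra) (a : A) (X : {set 'I_2}) : A :=
  if ord0 \in X then (if ord_max \in X then eone else a)
  else (if ord_max \in X then eperp a else ezero).

Definition bimorphism_of_cocone (A B C : EffectAlgebra) (v : cocone_data A B C)
    : A -> B -> C :=
  fun a b => v 2 2 (obs a) (obs b) [set (ord0, ord0)].

(* A bimorphism h and an observable pair (gA, gB) give weights h (gA {i}) (gB {j})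
   on [n] x [m]; biadditivity makes them sum to h 1 1 = 1, so every subfamily has a
   defined sum and X |-> sum_{(i,j) in X} is again an observable.  Naturality holds
   because the image of X under fA * fB is a disjoint union of rectangles, on which
   the weights sum to h (gA' (fA {i})) (gB' (fB {j})) = h (gA {i}) (gB {j}).
   Conversely, the Boolean map 2^[2] -> 2^[n] sending {1} to Z and {2} to ~Z is an
   arrow <gA Z> -> gA of the category of elements, so a cocone satisfies
   v_{<gA Z1>,<gB Z2>} {(1,1)} = v_{gA,gB} (Z1 x Z2).  Realising a1, a2 and a1 + a2
   inside one observable on [3] turns additivity of the component v_{g,<b>} into
   additivity of the induced h in its first argument.  Both round trips then reduce
   to the fact that a morphism out of 2^[n] is the sum of its values on atoms. *)

From HB Require Import structures.
From mathcomp Require Import all_boot.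
Set Implicit Arguments. Unset Strict Implicit. Unset Printing Implicit Defensive.

Section EffectAlgebraLaws.
Variable C : EffectAlgebra.
Implicit Types a b : C.

Lemma esum_perpl a : esum (eperp a) a = Some eone.
Proof. exact: eaE1 (eaE3 a).1. Qed.

Lemma eperp1 : eperp (@eone C) = ezero.
Proof. by apply: eaE4; exists eone; apply: esum_perpl. Qed.

Lemma eperpK a : eperp (eperp a) = a.
Proof. by symmetry; apply: (eaE3 (eperp a)).2; apply: esum_perpl. Qed.

Lemma esumr0 a : esum a ezero = Some a.
Proof.
rewrite -(eperpK a) -eperp1.
by case: (eaE2 (eaE3 (eperp a)).1 (eaE3 eone).1) => c [-> /(eaE3 _).2 ->].
Qed.

Lemma esum0r a : esum ezero a = Some a.
Proof. exact: eaE1 (esumr0 a). Qed.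

Lemma esum_cancel0 a b : esum a b = Some a -> b = ezero.
Proof.
move=> /eaE1 ba_a; apply: eaE4.
have [c [a_c b_c]] := eaE2 ba_a (eaE3 a).1.
by move: a_c b_c; rewrite (eaE3 a).1 => -[<-]; exists eone.
Qed.

(* With None for "undefined", the partial sum becomes a total commutative monoid,
   so that MathComp's big operators can be used for finite partial sums. *)
Definition oesum (x y : option C) : option C :=
  if x is Some a then (if y is Some b then esum a b else None) else None.

Lemma oesum_Some x y s : oesum x y = Some s ->
  exists a b, [/\ x = Some a, y = Some b & esum a b = Some s].
Proof. by case: x y => [a|] [b|] // ab; exists a, b. Qed.

Lemma oesumA : associative oesum.
Proof.
have assocL a b c bc s : esum b c = Some bc -> esum a bc = Some s ->
    exists ab, esum a b = Some ab /\ esum ab c = Some s.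
  move=> /eaE1 cb /eaE1 bca; have [ba [ab ab_c]] := eaE2 cb bca.
  by exists ba; split; apply: eaE1.
move=> [a|] [b|] [c|] //=; try by case: (esum a b).
case Ebc: (esum b c) => [bc|]; case Eab: (esum a b) => [ab|] //=.
- case Es: (esum a bc) => [s|].
    have [ab' [Eab' Es']] := assocL _ _ _ _ _ Ebc Es.
    by move: Eab' Es'; rewrite Eab => -[<-] ->.
  case Es': (esum ab c) => [s'|] //.
  have [bc' [Ebc' Es'']] := eaE2 Eab Es'.
  by move: Ebc' Es''; rewrite Ebc => -[<-]; rewrite Es.
- case Es: (esum a bc) => [s|] //.
  by have [ab' [Eab' _]] := assocL _ _ _ _ _ Ebc Es; rewrite Eab in Eab'.
- case Es: (esum ab c) => [s|] //.
  by have [bc' [Ebc' _]] := eaE2 Eab Es; rewrite Ebc in Ebc'.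
Qed.

Lemma oesumC : commutative oesum.
Proof.
move=> [a|] [b|] //=.
case Eab: (esum a b) => [s|]; first by rewrite (eaE1 Eab).
by case Eba: (esum b a) => [t|] //; rewrite (eaE1 Eba) in Eab.
Qed.

Lemma oesum0 : left_id (Some ezero) oesum.
Proof. by move=> [a|] //; rewrite /= esum0r. Qed.

End EffectAlgebraLaws.

HB.instance Definition _ (C : EffectAlgebra) :=
  Monoid.isComLaw.Build (option C) (Some ezero) (@oesum C)
    (@oesumA C) (@oesumC C) (@oesum0 C).

Notation "\esum_ ( i <- r | P ) F" := (\big[@oesum _/Some ezero]_(i <- r | P) Some F)
  (at level 41, F at level 41, i, r at level 50).
Notation "\esum_ ( i <- r ) F" := (\big[@oesum _/Some ezero]_(i <- r) Some F)
  (at level 41, F at level 41, i, r at level 50).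
Notation "\esum_ ( i 'in' A ) F" := (\big[@oesum _/Some ezero]_(i in A) Some F)
  (at level 41, F at level 41, i, A at level 50).
Notation "\esum_ ( i : T ) F" := (\big[@oesum _/Some ezero]_(i : T) Some F)
  (at level 41, F at level 41, i, T at level 50).

Lemma esum_listE (C : EffectAlgebra) (s : seq C) : esum_list s = \esum_(x <- s) x.
Proof. by elim: s => [|x s IHs]; rewrite ?big_nil // big_cons /= IHs. Qed.

Lemma big_esum_morph (C D : EffectAlgebra) (f : C -> D) :
    f ezero = ezero ->
    (forall a b s, esum a b = Some s -> esum (f a) (f b) = Some (f s)) ->
  forall (I : Type) (r : seq I) (P : pred I) (F : I -> C) s,
  \esum_(i <- r | P i) F i = Some s -> \esum_(i <- r | P i) f (F i) = Some (f s).
Proof.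
move=> f0 fD I r P F.
pose K x y := forall s, x = Some s -> y = Some (f s).
apply: (big_ind2 K) => [_ [<-] | x1 x2 y1 y2 Kx Ky s | i _ _ [<-]] //; first by rewrite f0.
by case/oesum_Some=> [a [b [/Kx -> /Ky -> /fD]]].
Qed.

Lemma setXUl (T1 T2 : finType) (X1 X2 : {set T1}) (Y : {set T2}) :
  setX (X1 :|: X2) Y = setX X1 Y :|: setX X2 Y.
Proof. by apply/setP => -[x y]; rewrite !inE andb_orl. Qed.

Lemma setXUr (T1 T2 : finType) (X : {set T1}) (Y1 Y2 : {set T2}) :
  setX X (Y1 :|: Y2) = setX X Y1 :|: setX X Y2.
Proof. by apply/setP => -[x y]; rewrite !inE andb_orr. Qed.

Lemma setX11 (T1 T2 : finType) (x : T1) (y : T2) : setX [set x] [set y] = [set (x, y)].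
Proof. by apply/setP => -[x' y']; rewrite !inE xpair_eqE. Qed.

Lemma setX_disjoint (T1 T2 : finType) (X1 X2 : {set T1}) (Y1 Y2 : {set T2}) :
  [disjoint X1 & X2] || [disjoint Y1 & Y2] -> [disjoint setX X1 Y1 & setX X2 Y2].
Proof.
rewrite -!setI_eq0 => /orP[] /eqP/setP XY0; apply/eqP/setP => -[x y];
  rewrite !inE /= andbACA.
- by move: (XY0 x); rewrite !inE => ->.
- by move: (XY0 y); rewrite !inE => ->; rewrite andbF.
Qed.

Lemma bool_hom_disjoint n n' (f : {set 'I_n} -> {set 'I_n'}) i j :
  bool_hom f -> i != j -> [disjoint f [set i] & f [set j]].
Proof.
move=> [f0 [_ [_ [fI _]]]] ij; rewrite -setI_eq0 -fI -f0.
suff -> : [set i] :&: [set j] = set0 by [].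
by apply/setP => k; rewrite !inE; case: eqP => // ->; apply/negbTE.
Qed.

Section SetEffectHom.
Variables (C : EffectAlgebra) (T : finType) (g : {set T} -> C).
Hypothesis g_hom : set_ea_hom g.

Lemma set_ea_hom0 : g set0 = ezero.
Proof.
apply: eaE4; exists eone.
by have := g_hom.2 set0 setT; rewrite set0I set0U g_hom.1 => ->.
Qed.

Lemma set_ea_homC (X : {set T}) : g (~: X) = eperp (g X).
Proof. by apply: (eaE3 (g X)).2; rewrite g_hom.2 ?setICr // setUCr g_hom.1. Qed.

Lemma set_ea_hom_sum (X : {set T}) : \esum_(i in X) g [set i] = Some (g X).
Proof.
have sum_seq r : uniq r -> \esum_(i <- r) g [set i] = Some (g [set i in r]).
  elim: r => [_|x r IHr /andP[xNr r_uniq]].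
    by rewrite big_nil -set_ea_hom0; congr (Some (g _)); apply/setP => i; rewrite !inE.
  rewrite big_cons IHr //= g_hom.2; last first.
    by apply/setP => i; rewrite !inE; case: eqP => // ->; rewrite (negPf xNr).
  by congr (Some (g _)); apply/setP => i; rewrite !inE.
rewrite -big_enum sum_seq ?enum_uniq //.
by congr (Some (g _)); apply/setP => i; rewrite inE mem_enum.
Qed.

End SetEffectHom.

Lemma eq_set_ea_hom (C : EffectAlgebra) (T : finType) (g g' : {set T} -> C) :
  g =1 g' -> set_ea_hom g -> set_ea_hom g'.
Proof. by move=> gg' [g1 gD]; split=> [|X Y]; rewrite -?gg' // => /gD; rewrite !gg'. Qed.

Lemma ea_hom0 (C D : EffectAlgebra) (f : C -> D) : ea_hom f -> f ezero = ezero.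
Proof. by move=> f_hom; apply: (@esum_cancel0 _ (f ezero)); apply: f_hom.2; apply: esumr0. Qed.

Definition weighted_obs (C : EffectAlgebra) (T : finType) (w : T -> C) (X : {set T}) : C :=
  odflt ezero (\esum_(t in X) w t).

Section WeightedObservable.
Variables (C : EffectAlgebra) (T : finType) (w : T -> C).
Hypothesis w_total : \esum_(t : T) w t = Some eone.

Lemma weighted_obsE (X : {set T}) : \esum_(t in X) w t = Some (weighted_obs w X).
Proof.
have : \esum_(t in [set: T]) w t = Some eone.
  by rewrite -w_total; apply: eq_bigl => t; rewrite inE.
by rewrite /weighted_obs (big_setID X) setTI => /oesum_Some [a [b [-> _ _]]].
Qed.

Lemma weighted_obs_hom : set_ea_hom (weighted_obs w).
Proof.
split.
  by rewrite /weighted_obs (eq_bigl xpredT) ?w_total // => t; rewrite inE.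
move=> X Y XY0.
have XYdisj : [disjoint X & Y] by rewrite -setI_eq0 XY0.
have := weighted_obsE (X :|: Y).
rewrite (eq_bigl [predU X & Y]) => [|t]; last by rewrite !inE.
by rewrite bigU // !weighted_obsE.
Qed.

End WeightedObservable.

Section Bimorphism.
Variables (A B C : EffectAlgebra) (h : A -> B -> C).
Hypothesis h_bim : is_bimorphism h.

Lemma bimorphism0l b : h ezero b = ezero.
Proof. by apply: (@esum_cancel0 _ (h ezero b)); apply: h_bim.2.1; apply: esumr0. Qed.

Lemma bimorphism0r a : h a ezero = ezero.
Proof. by apply: (@esum_cancel0 _ (h a ezero)); apply: h_bim.2.2; apply: esumr0. Qed.

Variables (T1 T2 : finType) (gA : {set T1} -> A) (gB : {set T2} -> B).
Hypotheses (gA_hom : set_ea_hom gA) (gB_hom : set_ea_hom gB).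

Lemma bimorphism_sum_setX (X : {set T1}) (Y : {set T2}) :
  \esum_(p in setX X Y) h (gA [set p.1]) (gB [set p.2]) = Some (h (gA X) (gB Y)).
Proof.
have -> : \esum_(p in setX X Y) h (gA [set p.1]) (gB [set p.2]) =
    \big[@oesum _/Some ezero]_(i in X) \esum_(j in Y) h (gA [set i]) (gB [set j]).
  by rewrite pair_big_dep; apply: eq_bigl => -[i j]; rewrite in_setX.
rewrite (eq_bigr (fun i => Some (h (gA [set i]) (gB Y)))) => [|i _].
  by apply: (big_esum_morph (f := h^~ (gB Y))) (set_ea_hom_sum gA_hom X);
    [apply: bimorphism0l | move=> *; apply: h_bim.2.1].
by apply: (big_esum_morph (f := h (gA [set i]))) (set_ea_hom_sum gB_hom Y);
  [apply: bimorphism0r | move=> *; apply: h_bim.2.2].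
Qed.

Lemma bimorphism_sum_total : \esum_(p : T1 * T2) h (gA [set p.1]) (gB [set p.2]) = Some eone.
Proof.
rewrite -h_bim.1 -gA_hom.1 -gB_hom.1 -bimorphism_sum_setX.
by apply: eq_bigl => -[i j]; rewrite in_setX !inE.
Qed.

End Bimorphism.

Section CoconeOfBimorphism.
Variables (A B C : EffectAlgebra) (h : A -> B -> C).

Lemma bimorphism_termsE n m (gA : {set 'I_n} -> A) (gB : {set 'I_m} -> B) X :
  esum_list (bimorphism_terms h gA gB X) = \esum_(p in X) h (gA [set p.1]) (gB [set p.2]).
Proof. by rewrite esum_listE /bimorphism_terms big_map big_enum. Qed.

Lemma cocone_of_bimorphismE n m (gA : {set 'I_n} -> A) (gB : {set 'I_m} -> B) X :
  cocone_of_bimorphism h gA gB X = weighted_obs (fun p => h (gA [set p.1]) (gB [set p.2])) X.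
Proof. by rewrite /cocone_of_bimorphism bimorphism_termsE. Qed.

Hypothesis h_bim : is_bimorphism h.

Lemma cocone_of_bimorphism_defined n m (gA : {set 'I_n} -> A) (gB : {set 'I_m} -> B) :
  intR_obj gA -> intR_obj gB -> forall X,
  esum_list (bimorphism_terms h gA gB X) = Some (cocone_of_bimorphism h gA gB X).
Proof.
move=> gA_hom gB_hom X.
rewrite bimorphism_termsE cocone_of_bimorphismE weighted_obsE //.
exact: (bimorphism_sum_total h_bim gA_hom gB_hom).
Qed.

Lemma cocone_of_bimorphism_hom n m (gA : {set 'I_n} -> A) (gB : {set 'I_m} -> B) :
  intR_obj gA -> intR_obj gB -> set_ea_hom (cocone_of_bimorphism h gA gB).
Proof.
move=> gA_hom gB_hom; apply: eq_set_ea_hom (fun X => esym (cocone_of_bimorphismE _ _ X)) _.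
exact: weighted_obs_hom (bimorphism_sum_total h_bim gA_hom gB_hom).
Qed.

Lemma cocone_of_bimorphism_natural n n' m m' (gA : {set 'I_n} -> A) (gA' : {set 'I_n'} -> A)
    (gB : {set 'I_m} -> B) (gB' : {set 'I_m'} -> B) fA fB :
  intR_obj gA' -> intR_obj gB' -> intR_arrow gA gA' fA -> intR_arrow gB gB' fB ->
  forall X, cocone_of_bimorphism h gA' gB' (bprod fA fB X) = cocone_of_bimorphism h gA gB X.
Proof.
move=> gA'_hom gB'_hom [fA_bool fA_comm] [fB_bool fB_comm] X.
rewrite !cocone_of_bimorphismE /weighted_obs; congr odflt.
pose F q := if q \in X then setX (fA [set q.1]) (fB [set q.2]) else set0.
have -> : bprod fA fB X = \bigcup_q F q by rewrite /bprod big_mkcond.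
rewrite partition_disjoint_bigcup => [|[i j] [i' j'] ij]; last first.
  rewrite /F; case: ifP => _; last by rewrite -setI_eq0 set0I.
  case: ifP => _; last by rewrite -setI_eq0 setI0.
  apply: setX_disjoint; move: ij; rewrite xpair_eqE negb_and.
  by case/orP => [/(bool_hom_disjoint fA_bool) -> | /(bool_hom_disjoint fB_bool) ->]; rewrite ?orbT.
rewrite [RHS]big_mkcond; apply: eq_bigr => q _; rewrite /F.
case: ifP => _; last by rewrite big_set0.
by rewrite (bimorphism_sum_setX h_bim gA'_hom gB'_hom) fA_comm fB_comm.
Qed.

End CoconeOfBimorphism.

Section Observable.
Variable A : EffectAlgebra.

Lemma obs_hom (a : A) : set_ea_hom (obs a).
Proof.
split=> [|X Y /setP XY0]; first by rewrite /obs !inE.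
move: (XY0 ord0) (XY0 ord_max); rewrite /obs !inE.
case: (ord0 \in X); case: (ord0 \in Y); case: (ord_max \in X); case: (ord_max \in Y) => //= _ _;
  by rewrite ?esumr0 ?esum0r ?(eaE3 a).1 ?esum_perpl.
Qed.

Lemma obs_ord0 (a : A) : obs a [set ord0] = a.
Proof. by rewrite /obs !inE. Qed.

Lemma obsT (a : A) : obs a setT = eone.
Proof. by rewrite /obs !inE. Qed.

Definition partition_map n (Z : {set 'I_n}) (S : {set 'I_2}) : {set 'I_n} :=
  [set k | if k \in Z then ord0 \in S else ord_max \in S].

Lemma partition_map_ord0 n (Z : {set 'I_n}) : partition_map Z [set ord0] = Z.
Proof. by apply/setP => k; rewrite !inE; case: (k \in Z). Qed.

Lemma partition_map_bool n (Z : {set 'I_n}) : bool_hom (partition_map Z).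
Proof.
by split; [|split; [|split; [|split]]] => *; apply/setP => k; rewrite !inE; case: (k \in Z).
Qed.

Lemma partition_map_arrow n (g : {set 'I_n} -> A) (Z : {set 'I_n}) :
  set_ea_hom g -> intR_arrow (obs (g Z)) g (partition_map Z).
Proof.
move=> g_hom; split=> [|S]; first exact: partition_map_bool.
rewrite /obs; case S0: (ord0 \in S); case S1: (ord_max \in S);
  rewrite -?g_hom.1 -?(set_ea_homC g_hom) -?(set_ea_hom0 g_hom);
  by congr g; apply/setP => k; rewrite !inE S0 S1; case: (k \in Z).
Qed.

Lemma esum_observable (a1 a2 s : A) : esum a1 a2 = Some s ->
  exists (g : {set 'I_3} -> A) (i j : 'I_3), [/\ set_ea_hom g, [set i] :&: [set j] = set0,
    g [set i] = a1, g [set j] = a2 & g ([set i] :|: [set j]) = s].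
Proof.
move=> a12.
pose w (k : 'I_3) := tnth [tuple a1; a2; eperp s] k.
have w_total : \esum_(k : 'I_3) w k = Some eone.
  rewrite !big_ord_recl big_ord0 oesumA /= esumr0 /w /= a12.
  exact: (eaE3 s).1.
pose i : 'I_3 := ord0; pose j : 'I_3 := lift ord0 ord0.
have g_hom := weighted_obs_hom w_total.
have g1 k : weighted_obs w [set k] = w k by rewrite /weighted_obs big_set1.
have ij0 : [set i] :&: [set j] = set0 by apply/setP => k; rewrite !inE; case: eqP => // ->.
exists (weighted_obs w), i, j; split=> //; rewrite ?g1 //.
by move: (g_hom.2 _ _ ij0); rewrite !g1 /= a12 => -[].
Qed.

End Observable.

Section BimorphismOfCocone.
Variables (A B C : EffectAlgebra) (v : cocone_data A B C).
Arguments v : clear implicits.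
Hypothesis v_cocone : is_cocone v.

Lemma cocone_obs_setX n m (gA : {set 'I_n} -> A) (gB : {set 'I_m} -> B)
    (Z1 : {set 'I_n}) (Z2 : {set 'I_m}) :
  intR_obj gA -> intR_obj gB ->
  v 2 2 (obs (gA Z1)) (obs (gB Z2)) [set (ord0, ord0)] = v n m gA gB (setX Z1 Z2).
Proof.
move=> gA_hom gB_hom.
rewrite -(v_cocone.2 _ _ _ _ _ _ _ _ _ _ (obs_hom _) gA_hom (obs_hom _) gB_hom
  (partition_map_arrow Z1 gA_hom) (partition_map_arrow Z2 gB_hom)).
by rewrite /bprod big_set1 /= !partition_map_ord0.
Qed.

Lemma bimorphism_of_cocone_bimorphism : is_bimorphism (bimorphism_of_cocone v).
Proof.
split; [|split].
- have := cocone_obs_setX setT setT (obs_hom (@eone A)) (obs_hom (@eone B)).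
  rewrite /bimorphism_of_cocone !obsT => ->.
  have -> : setX [set: 'I_2] [set: 'I_2] = setT by apply/setP => -[i j]; rewrite !inE.
  exact: (v_cocone.1 _ _ _ _ (obs_hom _) (obs_hom _)).1.
- move=> a1 a2 s b /esum_observable [g [i [j [g_hom ij0 <- <- <-]]]].
  rewrite /bimorphism_of_cocone -(obs_ord0 b) !(cocone_obs_setX _ _ g_hom (obs_hom b)) setXUl.
  apply: (v_cocone.1 _ _ _ _ g_hom (obs_hom _)).2.
  by apply/eqP; rewrite setI_eq0; apply: setX_disjoint; rewrite -setI_eq0 ij0 eqxx.
- move=> a b1 b2 s /esum_observable [g [i [j [g_hom ij0 <- <- <-]]]].
  rewrite /bimorphism_of_cocone -(obs_ord0 a) !(cocone_obs_setX _ _ (obs_hom a) g_hom) setXUr.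
  apply: (v_cocone.1 _ _ _ _ (obs_hom _) g_hom).2.
  by apply/eqP; rewrite setI_eq0; apply: setX_disjoint; rewrite -!setI_eq0 ij0 eqxx orbT.
Qed.

Lemma cocone_of_bimorphism_of_cocone n m (gA : {set 'I_n} -> A) (gB : {set 'I_m} -> B) :
  intR_obj gA -> intR_obj gB -> forall X,
  cocone_of_bimorphism (bimorphism_of_cocone v) gA gB X = v n m gA gB X.
Proof.
move=> gA_hom gB_hom X; rewrite cocone_of_bimorphismE /weighted_obs.
rewrite (eq_bigr (fun p => Some (v n m gA gB [set p]))) => [|[i j] _].
  by rewrite set_ea_hom_sum //; apply: v_cocone.1.
by rewrite /bimorphism_of_cocone cocone_obs_setX // setX11.
Qed.

End BimorphismOfCocone.

Lemma bimorphism_of_cocone_of_bimorphism (A B C : EffectAlgebra) (h : A -> B -> C) a b :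
  bimorphism_of_cocone (cocone_of_bimorphism h) a b = h a b.
Proof.
by rewrite /bimorphism_of_cocone cocone_of_bimorphismE /weighted_obs big_set1 /= !obs_ord0.
Qed.

Lemma bimorphism_hom_cocone_hom (A B C C' : EffectAlgebra) (h : A -> B -> C)
    (h' : A -> B -> C') (f : C -> C') :
  is_bimorphism h ->
  bimorphism_hom h h' f <-> cocone_hom (cocone_of_bimorphism h) (cocone_of_bimorphism h') f.
Proof.
move=> h_bim; split=> [[f_hom fh] | [f_hom fv]]; split=> //.
  move=> n m gA gB gA_hom gB_hom X.
  have := big_esum_morph (ea_hom0 f_hom) f_hom.2
    (weighted_obsE (bimorphism_sum_total h_bim gA_hom gB_hom) X).
  rewrite (eq_bigr (fun p => Some (h' (gA [set p.1]) (gB [set p.2])))) => [E|p _];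
    last by rewrite fh.
  by rewrite !cocone_of_bimorphismE [in RHS]/weighted_obs E.
move=> a b.
rewrite -(bimorphism_of_cocone_of_bimorphism h) -(bimorphism_of_cocone_of_bimorphism h').
by rewrite /bimorphism_of_cocone (fv _ _ _ _ (obs_hom a) (obs_hom b)).
Qed.

Theorem mainTheorem5 (A B : EffectAlgebra) :
  (forall (C : EffectAlgebra) (h : A -> B -> C), is_bimorphism h ->
     is_cocone (cocone_of_bimorphism h) /\
     (forall n m (gA : {set 'I_n} -> A) (gB : {set 'I_m} -> B),
        intR_obj gA -> intR_obj gB -> forall X,
        esum_list (bimorphism_terms h gA gB X)
          = Some (cocone_of_bimorphism h gA gB X))) /\
  (forall (C : EffectAlgebra) (v : cocone_data A B C), is_cocone v ->
     is_bimorphism (bimorphism_of_cocone v)) /\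
  (forall (C : EffectAlgebra) (h : A -> B -> C), is_bimorphism h ->
     forall a b, bimorphism_of_cocone (cocone_of_bimorphism h) a b = h a b) /\
  (forall (C : EffectAlgebra) (v : cocone_data A B C), is_cocone v ->
     forall n m (gA : {set 'I_n} -> A) (gB : {set 'I_m} -> B),
       intR_obj gA -> intR_obj gB -> forall X,
       cocone_of_bimorphism (bimorphism_of_cocone v) gA gB X = v n m gA gB X) /\
  (forall (C C' : EffectAlgebra) (h : A -> B -> C) (h' : A -> B -> C') (f : C -> C'),
     is_bimorphism h -> is_bimorphism h' ->
     (bimorphism_hom h h' f <->
      cocone_hom (cocone_of_bimorphism h) (cocone_of_bimorphism h') f)).
Proof.
split=> [C h h_bim | ].
  split; last exact: cocone_of_bimorphism_defined.
  split=> [n m gA gB | n n' m m' gA gA' gB gB' fA fB _ gA'_hom _ gB'_hom];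
    [exact: cocone_of_bimorphism_hom | exact: cocone_of_bimorphism_natural].
split; first exact: bimorphism_of_cocone_bimorphism.
split; first by move=> C h _; apply: bimorphism_of_cocone_of_bimorphism.
split; first exact: cocone_of_bimorphism_of_cocone.
by move=> C C' h h' f h_bim _; apply: bimorphism_hom_cocone_hom.
Qed.
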